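(* Let $\mathcal{X}$ be a finite set with symmetric nonnegative weights $(w_{x,x'})$ summing to $1$, with $w_x:=\sum_{x'}w_{x,x'}>0$ for all $x$. Let $\boldsymbol{M}=(m_{x,x'})$ be any real margin matrix. For $f:\mathcal{X}\to\mathbb{R}^k$, define the margin tuning loss $$\mathcal{L}_{\mathrm{M}}(f)=-2\sum_{x,x'}w_{x,x'}f(x)^\top f(x')+\sum_{x,x'}w_xw_{x'}\big[f(x)^\top f(x')+m_{x,x'}\big]^2 .$$ Let $\boldsymbol{A}=(w_{x,x'})$, $\boldsymbol{D}=\mathrm{diag}(w_x)$, $\bar{\boldsymbol{A}}=\boldsymbol{D}^{-1/2}\boldsymbol{A}\boldsymbol{D}^{-1/2}$, and $\bar{\boldsymbol{M}}=\boldsymbol{D}^{1/2}\boldsymbol{M}\boldsymbol{D}^{1/2}$. Let $F$ be the matrix with rows $\sqrt{w_x}\,f(x)^\top$. Then there is a constant $C$, depending only on $(w_{x,x'})$ and $\boldsymbol{M}$ and not on $f$, such that for all $f$ $$\mathcal{L}_{\mathrm{M}}(f)=\|(\bar{\boldsymbol{A}}-\bar{\boldsymbol{M}})-FF^\top\|_F^2+C .$$ In particular, minimizing $\mathcal{L}_{\mathrm{M}}$ over $f$ is equivalent to minimizing $\|(\bar{\boldsymbol{A}}-\bar{\boldsymbol{M}})-FF^\top\|_F^2$ over $F$.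
   Context: $\|\cdot\|_F$ is the Frobenius norm. *)

From mathcomp Require Import all_boot all_order all_algebra.
Set Implicit Arguments. Unset Strict Implicit. Unset Printing Implicit Defensive.
Import Order.TTheory GRing.Theory Num.Theory.
Local Open Scope ring_scope.

Definition wdeg (R : rcfType) (n : nat) (w : 'I_n -> 'I_n -> R) (x : 'I_n) : R :=
  \sum_(x' < n) w x x'.

Definition dotv (R : rcfType) (k : nat) (u v : 'rV[R]_k) : R :=
  (u *m v^T) 0 0.

Definition margin_loss (R : rcfType) (n k : nat) (w : 'I_n -> 'I_n -> R)
  (M : 'M[R]_n) (f : 'I_n -> 'rV[R]_k) : R :=
  - 2 * (\sum_(x < n) \sum_(x' < n) w x x' * dotv (f x) (f x'))
  + \sum_(x < n) \sum_(x' < n)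
      wdeg w x * wdeg w x' * (dotv (f x) (f x') + M x x') ^+ 2.

Definition adjmx (R : rcfType) (n : nat) (w : 'I_n -> 'I_n -> R) : 'M[R]_n :=
  \matrix_(i, j) w i j.

Definition Dsqrt (R : rcfType) (n : nat) (w : 'I_n -> 'I_n -> R) : 'M[R]_n :=
  diag_mx (\row_i Num.sqrt (wdeg w i)).
Definition Dinvsqrt (R : rcfType) (n : nat) (w : 'I_n -> 'I_n -> R) : 'M[R]_n :=
  diag_mx (\row_i (Num.sqrt (wdeg w i))^-1).

Definition Abar (R : rcfType) (n : nat) (w : 'I_n -> 'I_n -> R) : 'M[R]_n :=
  Dinvsqrt w *m adjmx w *m Dinvsqrt w.
Definition Mbar (R : rcfType) (n : nat) (w : 'I_n -> 'I_n -> R) (M : 'M[R]_n)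
  : 'M[R]_n := Dsqrt w *m M *m Dsqrt w.

Definition Fmx (R : rcfType) (n k : nat) (w : 'I_n -> 'I_n -> R)
  (f : 'I_n -> 'rV[R]_k) : 'M[R]_(n, k) :=
  \matrix_(i, j) (Num.sqrt (wdeg w i) * f i 0 j).

Definition frobenius (R : rcfType) (m p : nat) (A : 'M[R]_(m, p)) : R :=
  Num.sqrt (\sum_(i < m) \sum_(j < p) A i j ^+ 2).

(* Write s_x := sqrt w_x, c := s_x s_x', g := f(x)^T f(x') and b := (Abar - Mbar)_{x,x'}.
   Then w_{x,x'} = c (b + c m_{x,x'}) and w_x w_x' = c^2, while the (x,x') entry of
   FF^T is c g.  Each summand of the loss is therefore
   -2 c (b + c m) g + c^2 (g + m)^2 = (b - c g)^2 + (c^2 m^2 - b^2),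
   a square entry of (Abar - Mbar) - FF^T plus a term independent of f. *)

From mathcomp Require Import all_boot all_order all_algebra.
From mathcomp Require Import ring.
Import Order.TTheory GRing.Theory Num.Theory.
Local Open Scope ring_scope.

Lemma frobenius_sqr (R : rcfType) (m p : nat) (A : 'M[R]_(m, p)) :
  frobenius A ^+ 2 = \sum_(i < m) \sum_(j < p) A i j ^+ 2.
Proof.
rewrite /frobenius sqr_sqrtr //.
by apply: sumr_ge0 => i _; apply: sumr_ge0 => j _; apply: sqr_ge0.
Qed.

Lemma completed_square (R : comPzRingType) (b c g m : R) :
  - 2 * (c * (b + c * m)) * g + c ^+ 2 * (g + m) ^+ 2
  = (b - c * g) ^+ 2 + (c ^+ 2 * m ^+ 2 - b ^+ 2).
Proof. by ring. Qed.

Section NormalizedEntries.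

Context {R : rcfType} {n : nat} {w : 'I_n -> 'I_n -> R}.

Local Notation s x := (Num.sqrt (wdeg w x)).

Lemma Fmx_gramE (k : nat) (f : 'I_n -> 'rV[R]_k) (x x' : 'I_n) :
  (Fmx w f *m (Fmx w f)^T) x x' = s x * s x' * dotv (f x) (f x').
Proof.
rewrite /dotv !mxE mulr_sumr; apply: eq_bigr => j _.
by rewrite !mxE; ring.
Qed.

Lemma Abar_sub_MbarE (M : 'M[R]_n) (x x' : 'I_n) :
  (Abar w - Mbar w M) x x' = w x x' / (s x * s x') - s x * s x' * M x x'.
Proof.
rewrite /Abar /Mbar /Dinvsqrt /Dsqrt !mul_mx_diag !mul_diag_mx !mxE invfM.
by ring.
Qed.

Hypothesis wdeg_gt0 : forall x, 0 < wdeg w x.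

Lemma sqr_sqrt_wdeg (x : 'I_n) : s x ^+ 2 = wdeg w x.
Proof. by rewrite sqr_sqrtr // ltW. Qed.

Lemma sqrt_wdeg_neq0 (x : 'I_n) : s x != 0.
Proof. by rewrite sqrtr_eq0 -ltNge. Qed.

Lemma weight_Abar_sub_Mbar (M : 'M[R]_n) (x x' : 'I_n) :
  w x x' = s x * s x' * ((Abar w - Mbar w M) x x' + s x * s x' * M x x').
Proof.
rewrite Abar_sub_MbarE subrK mulrC divfK // mulf_neq0 //; exact: sqrt_wdeg_neq0.
Qed.

Lemma wdegM_sqr (x x' : 'I_n) : wdeg w x * wdeg w x' = (s x * s x') ^+ 2.
Proof. by rewrite exprMn !sqr_sqrt_wdeg. Qed.

End NormalizedEntries.

Theorem theorem3 (R : rcfType) (n : nat) (w : 'I_n -> 'I_n -> R) (M : 'M[R]_n)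
  (k : nat)
  (w_sym : forall x x', w x x' = w x' x)
  (w_ge0 : forall x x', 0 <= w x x')
  (w_sum1 : \sum_(x < n) \sum_(x' < n) w x x' = 1)
  (wdeg_gt0 : forall x, 0 < wdeg w x) :
  exists C : R, forall f : 'I_n -> 'rV[R]_k,
    margin_loss w M f
    = frobenius ((Abar w - Mbar w M) - Fmx w f *m (Fmx w f)^T) ^+ 2 + C.
Proof.
exists (\sum_(x < n) \sum_(x' < n)
   (wdeg w x * wdeg w x' * M x x' ^+ 2 - (Abar w - Mbar w M) x x' ^+ 2)) => f.
rewrite frobenius_sqr /margin_loss mulr_sumr -!big_split /=.
apply: eq_bigr => x _; rewrite mulr_sumr -!big_split /=.
apply: eq_bigr => x' _.
rewrite mulrA (weight_Abar_sub_Mbar wdeg_gt0 M) !(wdegM_sqr wdeg_gt0).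
rewrite completed_square -Fmx_gramE; congr (_ ^+ 2 + _).
by rewrite [RHS]mxE [(- _ : 'M_n) x x']mxE.
Qed.
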